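(* Let $k,\ell\ge 2$, $n\ge 1$, and let the multisets $e_1,\dots,e_{m}\subseteq\mathbb{Z}_n$ (each of size $k$) be arbitrary. Then the hypergraph $W_n$ determined by $e_1,\dots,e_m$ is orientable if and only if the weighted hypergraph $\hat W_n$ determined by $e_1,\dots,e_m$ is orientable. (In particular, for the random models, the events $\{W_n\text{ is orientable}\}$ and $\{\hat W_n\text{ is orientable}\}$ coincide.)
   Context: $\mathbb{Z}_n=\{0,\dots,n-1\}$ with arithmetic mod $n$; $[j,j+\ell)=\{j,\dots,j+\ell-1\}$ mod $n$. In the random model, $m=cn$ and each $e_i$ consists of $k$ independent uniform elements of $\mathbb{Z}_n$. A weighted hypergraph $H=(V,E,\eta)$ has weights $\eta:V\cup E\to\mathbb{N}$; an orientation assigns to each pair $(e,v)$ with $v\in e$ a number $\mu(e,v)\in\mathbb{N}_0$ such that $\sum_{v\in e}\mu(e,v)=\eta(e)$ for every $e\in E$ and $\sum_{e\ni v}\mu(e,v)\le\eta(v)$ for every $v\in V$; $H$ is orientable if an orientation exists. $W_n$: vertex set $\mathbb{Z}_n$, hyperedges $e'_i=\bigcup_{j\in e_i}[j,j+\ell)$ for $i=1,\dots,m$, all weights equal to $1$. $\hat W_n$: vertex set $\mathbb{Z}_n$ with $\eta(w)=\ell$ for every vertex $w$; ''ordinary'' edges $e_1,\dots,e_m$ with weight $1$; and ''helper'' edges $c_i=\{i,i+1\}$ for $i\in\mathbb{Z}_n$ with weight $\ell-1$. *)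

From mathcomp Require Import all_boot.
Set Implicit Arguments. Unset Strict Implicit. Unset Printing Implicit Defensive.

(* A weighted hypergraph with vertex type V, edge index type E (edges are
   indexed, so repeated edges are allowed), membership [mem e v] ("v in e"),
   vertex weights wV and edge weights wE.  An orientation assigns
   mu e v in N to each pair (e,v) with v in e; we encode it as a function
   on all pairs that vanishes when v is not in e. *)
Definition orientable (V E : finType) (mem : E -> pred V)
  (wV : V -> nat) (wE : E -> nat) : Prop :=
  exists mu : E -> V -> nat,
    (forall e v, ~~ mem e v -> mu e v = 0) /\
    (forall e, \sum_(v | mem e v) mu e v = wE e) /\
    (forall v, \sum_(e | mem e v) mu e v <= wV v).

(* Z_n is represented by 'I_n (n >= 1), with arithmetic mod n on values.
   Each e_i is a multiset of k elements of Z_n, given as a k-tuple. *)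

Definition W_mem (n m k l : nat) (e : 'I_m -> k.-tuple 'I_n) (i : 'I_m)
  : pred 'I_n :=
  fun w => has (fun j : 'I_n => [exists t : 'I_l, val w == (j + t) %% n])
               (e i).

Definition W_orientable (n m k l : nat) (e : 'I_m -> k.-tuple 'I_n) : Prop :=
  orientable (W_mem l e) (fun _ => 1) (fun _ => 1).

(* Edges of \hat W_n: inl i = ordinary edge e_i, inr i = helper edge
   c_i = {i, i+1 mod n}. *)
Definition What_mem (n m k : nat) (e : 'I_m -> k.-tuple 'I_n)
  (x : 'I_m + 'I_n) : pred 'I_n :=
  match x with
  | inl i => fun w => w \in e i
  | inr i => fun w => (val w == val i) || (val w == (i + 1) %% n)
  end.

Definition What_weight (n m l : nat) (x : 'I_m + 'I_n) : nat :=
  match x with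
  | inl _ => 1
  | inr _ => l - 1
  end.

Definition What_orientable (n m k l : nat) (e : 'I_m -> k.-tuple 'I_n)
  : Prop :=
  orientable (What_mem e) (fun _ => l) (@What_weight n m l).

From mathcomp Require Import all_boot zify.
Set Implicit Arguments. Unset Strict Implicit. Unset Printing Implicit Defensive.

(* An orientation of W_n is a system of distinct representatives w_i of the
   windows e'_i, i.e. w_i = p_i + t_i with p_i in e_i and 0 <= t_i < l.  Both
   W_n and \hat W_n are orientable iff there are choices p_i in e_i and a
   circulation y_u in [0, l-1] along the cycle u -> u+1 such that
   #{i | p_i = u+1} + y_u <= 1 + y_(u+1).  In \hat W_n, y_u is the part of
   the weight of the helper edge {u, u+1} sent to u+1; from W_n, y_u is the
   number of arcs [p_i, w_i) passing over u.  Conversely, after shifting y so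
   that it vanishes at some vertex c, cutting the cycle just after c and
   telescoping the inequalities gives Hall's condition for scheduling unit
   jobs released at the p_i, each within l slots, on the path of n slots; the
   greedy schedule in order of release realises it. *)

Definition cdist n (p v : 'I_n) : nat := if p <= v then v - p else v + n - p.

Section CyclicDistance.
Variables (n : nat) (p : 'I_n).

Lemma cdist_lt v : cdist p v < n.
Proof.
by have hp := ltn_ord p; have hv := ltn_ord v; rewrite /cdist; case: ifP; lia.
Qed.

Lemma cdist_addmod v : (p + cdist p v) %% n = v.
Proof.
have hp := ltn_ord p; have hv := ltn_ord v; rewrite /cdist; case: ifP => le_pv.
  by rewrite subnKC // modn_small.
by rewrite addnBA; [rewrite addKn addnC modnDl modn_small | lia].
Qed.

Lemma cdist_inj : injective (cdist p).
Proof.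
by move=> v v' eq_vv'; apply: val_inj; rewrite /= -cdist_addmod eq_vv' cdist_addmod.
Qed.

Lemma cdist_id : cdist p p = 0.
Proof. by rewrite /cdist leqnn subnn. Qed.

Lemma eq_cdist v r : r < n -> (val v == (p + r) %% n) = (cdist p v == r).
Proof.
move=> r_lt /=; rewrite -{1}(cdist_addmod v) eqn_modDl.
by rewrite !modn_small // cdist_lt.
Qed.

Lemma cdist_ordS v :
  cdist p (ordS v) = if cdist p v == n.-1 then 0 else (cdist p v).+1.
Proof.
have hp := ltn_ord p; have hv := ltn_ord v; rewrite /cdist /=.
case: (v.+1 =P n) => [vn|ne].
  rewrite vn modnn.
  by case: (leqP p v) => /=; case: (leqP p 0) => /=; case: eqP; lia.
rewrite modn_small; last by lia.
by case: (leqP p v) => /=; case: (leqP p v.+1) => /=; case: eqP; lia.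
Qed.

End CyclicDistance.

Lemma val_iter_ordS n (b : 'I_n) r : val (iter r (@ordS n) b) = (b + r) %% n.
Proof.
elim: r => [|r IH] /=; first by rewrite addn0 modn_small.
by rewrite IH -addn1 modnDml addn1 addnS.
Qed.

Lemma sum_pred2 (I : finType) (a b : I) (F : I -> nat) :
  \sum_(x | (x == a) || (x == b)) F x = F a + (b != a) * F b.
Proof.
rewrite (bigD1 a) ?eqxx //=; congr (_ + _); case: eqP => [->|ne_ba].
  by rewrite big1 // => x /andP[/orP[]-> //].
rewrite (bigD1 b) ?eqxx ?orbT /=; last by apply/eqP.
by rewrite mul1n big1 ?addn0 // => x /andP[/andP[/orP[]-> //]].
Qed.

Lemma sum_eq_le1 (I : finType) (T : eqType) (f : I -> T) (v : T) :
  injective f -> \sum_i (f i == v : nat) <= 1.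
Proof.
move=> f_inj; case: (pickP (fun i => f i == v)) => [i /eqP fi_v | none].
  rewrite (bigD1 i) ?fi_v ?eqxx //= big1 // => j /negbTE ne_ji.
  by apply/eqP; rewrite eqb0 -fi_v (inj_eq f_inj) ne_ji.
by rewrite big1 // => i _; rewrite none.
Qed.

Lemma orientable1P (V E : finType) (mem : E -> pred V) :
  orientable mem (fun _ => 1) (fun _ => 1) <->
  exists2 f : E -> V, injective f & forall x, mem x (f x).
Proof.
split=> [[mu [mu0 [edge_sum vertex_sum]]] | [f f_inj memf]].
  have pick_f x : exists v, mu x v != 0.
    apply/existsP; apply: contraT; rewrite negb_exists => /forallP mu_x0.
    by have := edge_sum x; rewrite big1 // => v _; apply/eqP/negPn.
  have [f mu_f] := fin_all_exists pick_f.
  have memf x : mem x (f x) by apply: contraTT (mu_f x) => /mu0->.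
  exists f => // x x' eq_f; apply/eqP/negPn/negP => ne_xx'.
  have := vertex_sum (f x); rewrite (bigD1 x) ?memf // (bigD1 x') /=; last first.
    by rewrite eq_f memf eq_sym.
  by have := mu_f x; have := mu_f x'; rewrite -eq_f; lia.
exists (fun x v => v == f x : nat); split; [|split].
- by move=> x v; case: eqP => // ->; rewrite memf.
- move=> x; rewrite (bigD1 (f x)) ?memf //= eqxx.
  by rewrite big1 // => v /andP[_ /negbTE->].
- move=> v; apply: leq_trans (sum_eq_le1 v f_inj).
  by rewrite big_mkcond leq_sum // => x _; case: ifP; rewrite // eq_sym.
Qed.

(* [p i] is the vertex receiving the ordinary edge [e i]; the helper edge
   [{u, u+1}] gives [y u] to [u+1] and [l - 1 - y u] to [u]; the inequality
   is the capacity constraint at [u+1]. *)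
Definition helper_flow n m k l (e : 'I_m -> k.-tuple 'I_n)
    (p : 'I_m -> 'I_n) (y : 'I_n -> nat) : Prop :=
  [/\ forall i, p i \in e i, forall v, y v <= l - 1 &
      forall u, \sum_i (p i == ordS u : nat) + y u <= 1 + y (ordS u)].

Lemma eq_ordS n (u v : 'I_n) : (v == ordS u) = (u == ord_pred v).
Proof. by apply/eqP/eqP=> [->|->]; rewrite ?ordSK ?ord_predK. Qed.

Section HatW.
Variables (n m k l : nat) (e : 'I_m -> k.-tuple 'I_n).

Lemma What_mem_inr (h : 'I_n) :
  What_mem e (inr h) =1 [pred w | (w == h) || (w == ordS h)].
Proof. by move=> w; rewrite /= addn1. Qed.

Lemma What_mem_inr_at (v : 'I_n) :
  (fun h => What_mem e (inr h) v) =1 [pred h | (h == v) || (h == ord_pred v)].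
Proof. by move=> h; rewrite What_mem_inr /= eq_sym eq_ordS. Qed.

Lemma helper_flow_What p y : 0 < l -> helper_flow l e p y -> What_orientable l e.
Proof.
move=> l_gt0 [p_e y_le balance].
pose mu (x : 'I_m + 'I_n) (w : 'I_n) : nat :=
  match x with
  | inl i => w == p i
  | inr h => (w == h) * (l - 1 - y h) + (w == ordS h) * y h
  end.
exists mu; split; [|split].
- case=> [i|h] w; first by rewrite /=; case: eqP => // ->; rewrite p_e.
  by rewrite What_mem_inr /= => /norP[/negbTE-> /negbTE->].
- case=> [i|h] /=.
    by rewrite (bigD1 (p i)) //= eqxx big1 // => w /andP[_ /negbTE->].
  rewrite (eq_bigl _ _ (What_mem_inr h)) sum_pred2 /= !eqxx eq_sym.
  by have := y_le h; case: eqP => _; lia.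
- move=> v; have := balance (ord_pred v); rewrite ord_predK.
  set cnt := \sum_i _; set u := ord_pred v => bal.
  rewrite big_sumType (eq_bigl _ _ (What_mem_inr_at v)) sum_pred2 /= -/u eqxx.
  rewrite [v == ordS u]eq_ordS eqxx [v == ordS v]eq_ordS -/u [v == u]eq_sym.
  set S := \sum_(i < m | _) _.
  have inl_le : S <= cnt.
    by rewrite /S big_mkcond leq_sum // => i _; case: ifP; rewrite // eq_sym.
  have := y_le v; have := y_le u; move: inl_le bal.
  by case: (u =P v) => [->|_] /=; lia.
Qed.

Lemma What_helper_flow :
  What_orientable l e -> exists p y, helper_flow l e p y.
Proof.
case=> mu [_ [edge_sum vertex_sum]].
have pick_p i : exists w, (w \in e i) && (mu (inl i) w != 0).
  apply/existsP; apply: contraT; rewrite negb_exists => /forallP mu_i0.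
  have := edge_sum (inl i); rewrite /= big1 // => w w_e.
  by apply/eqP; have := mu_i0 w; rewrite w_e /= negbK.
have [p /all_and2[p_e mu_p]] :
    exists p, forall i, p i \in e i /\ mu (inl i) (p i) != 0.
  by have [p Hp] := fin_all_exists pick_p; exists p => i; apply/andP.
pose y (h : 'I_n) := (ordS h != h) * mu (inr h) (ordS h).
have helper_sum h : mu (inr h) h + y h = l - 1.
  by have := edge_sum (inr h); rewrite /= (eq_bigl _ _ (What_mem_inr h)) sum_pred2.
have y_le h : y h <= l - 1 by rewrite -(helper_sum h) leq_addl.
have inr_sum v : \sum_(h | What_mem e (inr h) v) mu (inr h) v
                 = l - 1 - y v + y (ord_pred v).
  rewrite (eq_bigl _ _ (What_mem_inr_at _)) sum_pred2 -(helper_sum v) addnK.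
  by rewrite /y ord_predK eq_sym.
clearbody y; exists p, y; split=> // u.
set cnt := \sum_i _.
have := vertex_sum (ordS u); rewrite big_sumType inr_sum ordSK /=.
set S := \sum_(i | _) _ => load_v.
have cnt_le : cnt <= S.
  rewrite /cnt /S [X in _ <= X]big_mkcond leq_sum // => i _ /=.
  by case: (p i =P ordS u) => [<-|_] //; rewrite p_e lt0n mu_p.
by have := y_le (ordS u); lia.
Qed.

End HatW.

Lemma cdist_ordS_balance n (p w u : 'I_n) :
  (p == ordS u) + (cdist p u < cdist p w) =
  (cdist p (ordS u) < cdist p w) + (w == ordS u).
Proof.
rewrite -(inj_eq (@cdist_inj _ p) p) -(inj_eq (@cdist_inj _ p) w) cdist_id.
rewrite cdist_ordS; have := cdist_lt p u; have := cdist_lt p w.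
by rewrite -subn1; case: (cdist p u =P n - 1) => [->|_]; lia.
Qed.

Section Arcs.
Variables (n m l : nat) (p w : 'I_m -> 'I_n).

Definition arc_load (v : 'I_n) : nat :=
  \sum_i (cdist (p i) v < cdist (p i) (w i) : nat).

Lemma arc_load_ordS u :
  \sum_i (p i == ordS u : nat) + arc_load u =
  arc_load (ordS u) + \sum_i (w i == ordS u : nat).
Proof.
by rewrite /arc_load -!big_split; apply: eq_bigr => i _; apply: cdist_ordS_balance.
Qed.

Hypotheses (w_inj : injective w) (arc_lt : forall i, cdist (p i) (w i) < l).

Lemma arc_load_le v : arc_load v <= l - 1.
Proof.
pose covers i := cdist (p i) v < cdist (p i) (w i).
pose d i := cdist v (w i).
have d_inj : injective d := inj_comp (@cdist_inj _ v) w_inj.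
have d_covers i : covers i -> d i = cdist (p i) (w i) - cdist (p i) v.
  move=> cov; apply/eqP; rewrite -eq_cdist; last first.
    by apply: leq_ltn_trans (leq_subr _ _) (cdist_lt _ _).
  rewrite -(cdist_addmod (p i) v) modnDml -addnA subnKC ?cdist_addmod //.
  exact: ltnW.
have -> : arc_load v = #|[pred i | covers i]|.
  rewrite /arc_load -sum1_card [RHS]big_mkcond; apply: eq_bigr => i _.
  by rewrite inE /covers; case: ifP.
rewrite cardE -(size_map d) -(size_iota 1 (l - 1)); apply: uniq_leq_size.
  by rewrite map_inj_uniq ?enum_uniq.
move=> x /mapP[i]; rewrite mem_enum => cov ->; rewrite mem_iota d_covers //.
by have := arc_lt i; rewrite inE /covers in cov; lia.
Qed.

End Arcs.

Lemma W_helper_flow n m k l (e : 'I_m -> k.-tuple 'I_n) :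
  W_orientable l e -> exists p y, helper_flow l e p y.
Proof.
case/orientable1P=> w w_inj w_mem.
have pick_p i : exists j, (j \in e i) && (cdist j (w i) < l).
  have /hasP[j j_e /existsP[t /eqP w_t]] := w_mem i.
  exists j; rewrite j_e /=.
  have /eqP-> : cdist j (w i) == t %% n.
    rewrite -eq_cdist ?modnDmr ?w_t //.
    by rewrite ltn_pmod // (leq_ltn_trans _ (ltn_ord j)).
  exact: leq_ltn_trans (leq_mod _ _) (ltn_ord t).
have [p /all_and2[p_e arc_lt]] :
    exists p, forall i, p i \in e i /\ cdist (p i) (w i) < l.
  by have [p Hp] := fin_all_exists pick_p; exists p => i; apply/andP.
exists p, (arc_load p w); split=> // [v | u]; first exact: arc_load_le.
by rewrite arc_load_ordS addnC leq_add2r sum_eq_le1.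
Qed.

Lemma ltn_sum (I : finType) (F G : I -> nat) j :
  (forall i, F i <= G i) -> F j < G j -> \sum_i F i < \sum_i G i.
Proof.
move=> le_FG lt_j; rewrite (bigD1 j) // [X in _ < X](bigD1 j) //= -addSn.
by rewrite leq_add // leq_sum.
Qed.

Lemma leq_radix N a b x y : x < N -> y < N -> a * N + x <= b * N + y -> a <= b.
Proof. by nia. Qed.

Section IntervalScheduling.
Variables (I : finType) (a : I -> nat) (l n : nat).
Hypothesis window_load :
  forall u v, v < n -> \sum_i (u <= a i <= v : nat) <= v - u + l.
Hypothesis tail_load : forall u, \sum_i (u <= a i : nat) <= n - u.

Let rk i := a i * #|I| + enum_rank i.

Lemma rk_mono i j : rk i <= rk j -> a i <= a j.
Proof. exact: leq_radix (ltn_ord (enum_rank i)) (ltn_ord (enum_rank j)). Qed.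

Lemma rk_inj : injective rk.
Proof.
move=> i j /(congr1 (modn^~ #|I|)); rewrite /rk !modnMDl !modn_small //.
by move/val_inj/enum_rank_inj.
Qed.

Let load_before i u := \sum_q ((u <= a q) && (rk q <= rk i) : nat).

(* The time at which job [i] completes when the jobs are run in [rk] order,
   each one in the first free slot after its release time. *)
Let finish i := \max_(u < (a i).+1) (u + load_before i u).

Lemma release_lt i : a i < n.
Proof. by have := tail_load (a i); rewrite (bigD1 i) //= leqnn; lia. Qed.

Lemma finish_gt i : a i < finish i.
Proof.
apply: leq_trans (leq_bigmax (ord_max : 'I_(a i).+1)); rewrite /= -addn1 leq_add2l.
by rewrite /load_before (bigD1 i) //= !leqnn.
Qed.

Lemma finish_le_window i : finish i <= a i + l.
Proof.
apply/bigmax_leqP => u _; have u_le := ltn_ord u.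
have := window_load u (release_lt i).
suff : load_before i u <= \sum_q (u <= a q <= a i : nat) by lia.
apply: leq_sum => q _; case: (u <= a q) => //=.
by case: (boolP (rk q <= rk i)) => // /rk_mono ->.
Qed.

Lemma finish_le_n i : finish i <= n.
Proof.
apply/bigmax_leqP => u _; have := ltn_ord u; have := release_lt i.
have := tail_load u.
suff : load_before i u <= \sum_q (u <= a q : nat) by lia.
by apply: leq_sum => q _; case: (u <= a q) => //=; rewrite leq_b1.
Qed.

Lemma finish_mono i j : rk i < rk j -> finish i < finish j.
Proof.
move=> lt_ij; have le_aij := rk_mono (ltnW lt_ij).
suff : finish i <= (finish j).-1 by have := finish_gt j; lia.
apply/bigmax_leqP => u _; have u_le : u < (a j).+1 by have := ltn_ord u; lia.
suff : load_before i u < load_before j u.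
  have := leq_bigmax (F := fun v : 'I_(a j).+1 => v + load_before j v) (Ordinal u_le).
  by rewrite /finish /=; lia.
apply: (ltn_sum (j := j)) => [q|].
  case: (u <= a q) => //=; case: (boolP (rk q <= rk i)) => //= le_qi.
  by rewrite (leq_trans le_qi (ltnW lt_ij)).
by rewrite leqnn [rk j <= rk i]leqNgt lt_ij; move: u_le; rewrite ltnS => ->.
Qed.

Lemma interval_schedule :
  exists2 s : I -> nat, injective s & forall i, a i <= s i < minn (a i + l) n.
Proof.
exists (fun i => (finish i).-1) => [i j eq_ij | i].
  case: (ltngtP (rk i) (rk j)) => [lt_ij | lt_ji | /rk_inj //].
    by have := finish_mono lt_ij; have := finish_gt i; lia.
  by have := finish_mono lt_ji; have := finish_gt j; lia.
by have := finish_gt i; have := finish_le_window i; have := finish_le_n i; lia.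
Qed.

End IntervalScheduling.

Lemma sum_window_le (I : finType) (a : I -> nat) (Y : nat -> nat) u v :
  \sum_i (a i == u : nat) <= 1 + Y u ->
  (forall r, u < r <= v -> \sum_i (a i == r : nat) + Y r.-1 <= 1 + Y r) ->
  \sum_i (u <= a i <= v : nat) <= v - u + 1 + Y v.
Proof.
move=> load_u; case: (leqP u v) => [le_uv | lt_vu]; last first.
  by move=> _; rewrite big1 // => i _; lia.
rewrite -(subnKC le_uv); elim: (v - u) => [|j IH] step.
  rewrite addn0 subnn add0n (eq_bigr (fun i => (a i == u : nat))) //.
  by move=> i _; lia.
rewrite addnS.
rewrite (eq_bigr (fun i => (u <= a i <= u + j : nat) + (a i == (u + j).+1)));
  last by move=> i _; lia.
rewrite big_split /=.
have := IH (fun r (r_in : u < r <= u + j) => step r ltac:(lia)).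
by have /= := step (u + j).+1 ltac:(lia); lia.
Qed.

Lemma helper_flow_sub n m k l (e : 'I_m -> k.-tuple 'I_n) p y d :
  helper_flow l e p y -> (forall v, d <= y v) ->
  helper_flow l e p (fun v => y v - d).
Proof.
case=> p_e y_le balance d_le; split=> // [v | u]; first by have := y_le v; lia.
by have := balance u; have := d_le u; have := d_le (ordS u); lia.
Qed.

Section CutHelperFlow.
Variables (n m k l : nat) (e : 'I_m -> k.-tuple 'I_n).
Variables (p : 'I_m -> 'I_n) (y : 'I_n -> nat) (c : 'I_n).
Hypotheses (l_gt0 : 0 < l) (flow : helper_flow l e p y) (y_c : y c = 0).

Let n_gt0 : 0 < n := leq_ltn_trans (leq0n c) (ltn_ord c).
Let b := ordS c.
Let pos r := iter r (@ordS n) b.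
Let a i := cdist b (p i).

Lemma ordS_pos r : ordS (pos r) = pos r.+1.
Proof. by []. Qed.

Lemma pos_last : pos n.-1 = c.
Proof.
apply: ordS_inj; rewrite ordS_pos prednK //; apply: val_inj.
by rewrite val_iter_ordS modnDr modn_small.
Qed.

Lemma eq_pos i r : r < n -> (p i == pos r) = (a i == r).
Proof. by move=> r_lt; rewrite -val_eqE val_iter_ordS eq_cdist. Qed.

Lemma load_step r : 0 < r < n ->
  \sum_i (a i == r : nat) + y (pos r.-1) <= 1 + y (pos r).
Proof.
case/andP=> r_gt0 r_lt; have [_ _ balance] := flow.
have := balance (pos r.-1); rewrite ordS_pos prednK //.
by under eq_bigr => i _ do rewrite eq_pos //.
Qed.

Lemma load_le u : \sum_i (a i == u : nat) <= 1 + y (pos u).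
Proof.
case: (ltnP u n) => [u_lt | u_ge]; last first.
  by rewrite big1 // => i _; have := cdist_lt b (p i); rewrite /a; lia.
case: (posnP u) => [-> | u_gt0]; last first.
  by have := load_step (introT andP (conj u_gt0 u_lt)); lia.
have [_ _ balance] := flow; have := balance c; rewrite y_c addn0.
by under eq_bigr => i _ do rewrite -/b -[b]/(pos 0) eq_pos //.
Qed.

Lemma cut_window_load u v : v < n ->
  \sum_i (u <= a i <= v : nat) <= v - u + l.
Proof.
move=> v_lt; have [_ y_le _] := flow; have := y_le (pos v).
have := sum_window_le (load_le u)
  (fun r (r_in : u < r <= v) => load_step (r := r) ltac:(lia)).
by lia.
Qed.

Lemma cut_tail_load u : \sum_i (u <= a i : nat) <= n - u.
Proof.
case: (ltnP u n) => [u_lt | u_ge]; last first.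
  by rewrite big1 // => i _; have := cdist_lt b (p i); rewrite /a; lia.
rewrite (eq_bigr (fun i => (u <= a i <= n.-1 : nat))) => [|i _]; last first.
  by have := cdist_lt b (p i); rewrite /a; lia.
apply: leq_trans (sum_window_le (v := n.-1) (load_le u)
  (fun r (r_in : u < r <= n.-1) => load_step (r := r) ltac:(lia))) _.
by rewrite pos_last y_c; lia.
Qed.

Lemma cut_helper_flow_W : W_orientable l e.
Proof.
have [s s_inj s_in] := interval_schedule cut_window_load cut_tail_load.
have {s_in} [le_as lt_sl lt_sn] : [/\ forall i, a i <= s i,
    forall i, s i < a i + l & forall i, s i < n].
  by split=> i; have := s_in i; lia.
apply/orientable1P; exists (fun i => pos (s i)) => [i j /(congr1 val) | i].
  rewrite !val_iter_ordS => /eqP; rewrite eqn_modDl !modn_small //.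
  by move/eqP/s_inj.
have [p_e _ _] := flow; apply/hasP; exists (p i) => //.
have lt_t : s i - a i < l by have := lt_sl i; lia.
apply/existsP; exists (Ordinal lt_t); apply/eqP => /=.
rewrite val_iter_ordS -{1}(subnKC (le_as i)) addnA -modnDml.
by rewrite /a cdist_addmod.
Qed.

End CutHelperFlow.

Lemma helper_flow_W n m k l (e : 'I_m -> k.-tuple 'I_n) p y :
  0 < n -> 0 < l -> helper_flow l e p y -> W_orientable l e.
Proof.
move=> n_gt0 l_gt0 flow.
have [c _ c_min] := @arg_minnP _ (Ordinal n_gt0) xpredT y isT.
have flow_c := helper_flow_sub flow (fun v => c_min v isT).
exact: cut_helper_flow_W l_gt0 flow_c (subnn (y c)).
Qed.

Theorem proposition1 (k l n m : nat) (e : 'I_m -> k.-tuple 'I_n) :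
  2 <= k -> 2 <= l -> 1 <= n ->
  (W_orientable l e <-> What_orientable l e).
Proof.
move=> _ l_ge2 n_gt0; have l_gt0 : 0 < l by apply: leq_trans l_ge2.
split=> [/W_helper_flow | /What_helper_flow] [p [y flow]].
  exact: helper_flow_What flow.
exact: helper_flow_W flow.
Qed.
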